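(* For any choice of almost disjoint family and enumeration in the definition of $\rho^{[0,1]}$, we have $\rho^{[0,1]}\leq_K\rho_{\mathrm{conv}}$ and $\rho_{\mathrm{conv}}\not\leq_K\rho^{[0,1]}$.
   Context: $\mathrm{conv}$ is the ideal on $\mathbb{Q}\cap[0,1]$ of all sets covered by the ranges of finitely many sequences in $\mathbb{Q}\cap[0,1]$ convergent in $[0,1]$; $\mathrm{conv}^+$ is its complement in $\mathcal{P}(\mathbb{Q}\cap[0,1])$. $\rho_{\mathrm{conv}}\colon\mathrm{conv}^+\to[\mathbb{Q}\cap[0,1]]^\omega$ is $\rho_{\mathrm{conv}}(A)=A$ (domain sets are subsets of $\Omega=\mathbb{Q}\cap[0,1]$). Definition of $\rho^{[0,1]}$: let $\mathcal{A}=\{A_\alpha:\alpha<\mathfrak{c}\}$ be an almost disjoint family on $\omega$ (pairwise distinct infinite subsets with pairwise finite intersections). Let $X$ be the set of all $x\colon\omega\times\omega\to[0,1]\cap\mathbb{Q}$ such that: (i) for every $p\in[0,1]$ there is an open neighborhood $U$ of $p$ with $x[(\omega\setminus[0,n])\times\omega]\not\subseteq U$ for all $n$; (ii) $x$ is injective; (iii) $x[(\omega\setminus[0,n])\times\omega]\notin\mathrm{conv}$ for all $n$. Fix an enumeration $X=\{x_\alpha:\alpha<\mathfrak{c}\}$. Let $\overline{\mathcal{A}}=\{A\setminus K:A\in\mathcal{A},K\in[\omega]^{<\omega}\}$ and $\rho^{[0,1]}\colon\overline{\mathcal{A}}\to[[0,1]\cap\mathbb{Q}]^\omega$, $\rho^{[0,1]}(A_\alpha\setminus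 K)=x_\alpha[(\omega\setminus[0,\max(A_\alpha\cap K)])\times\omega]$, with $\max\emptyset=0$; here $[0,m]=\{0,\dots,m\}$ (domain sets are subsets of $\Omega=\omega$). Katětov order: for $\rho_i\colon\mathcal{F}_i\to[\Lambda_i]^\omega$ with $\mathcal{F}_i\subseteq[\Omega_i]^\omega$, $\rho_2\leq_K\rho_1$ if there is $f\colon\Lambda_1\to\Lambda_2$ such that for every $F_1\in\mathcal{F}_1$ there is $F_2\in\mathcal{F}_2$ such that for every finite $K_1\subseteq\Omega_1$ there is a finite $K_2\subseteq\Omega_2$ with $\rho_2(F_2\setminus K_2)\subseteq f[\rho_1(F_1\setminus K_1)]$. *)

From Stdlib Require Import Reals Qreals List ClassicalEpsilon.
Open Scope R_scope.

Definition set (T : Type) := T -> Prop.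
Definition setminus {T} (A K : set T) : set T := fun x => A x /\ ~ K x.
Definition finite {T} (K : set T) : Prop := exists l : list T, forall x, K x -> In x l.
Definition infinite {T} (K : set T) : Prop := ~ finite K.

Definition Q01 : Type := {r : R | 0 <= r <= 1 /\ exists q : Q, r = Q2R q}.

Definition conv (A : set Q01) : Prop :=
  exists ss : list (nat -> Q01),
    (forall s, In s ss -> exists L, 0 <= L <= 1 /\ Un_cv (fun n => proj1_sig (s n)) L) /\
    (forall q, A q -> exists s, In s ss /\ exists n, s n = q).

Definition conv_plus (A : set Q01) : Prop := ~ conv A.

Definition rho_conv (A : set Q01) : set Q01 := A.

(* Katetov order: Kle F2 rho2 F1 rho1  means  rho2 <=_K rho1, where
   rho_i : F_i -> [Lambda_i]^omega, F_i a family of subsets of Omega_i. *)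
Definition Kle {O2 L2 O1 L1 : Type}
  (F2 : set (set O2)) (rho2 : set O2 -> set L2)
  (F1 : set (set O1)) (rho1 : set O1 -> set L1) : Prop :=
  exists f : L1 -> L2,
    forall A1, F1 A1 ->
      exists A2, F2 A2 /\
        forall K1 : set O1, finite K1 ->
          exists K2 : set O2, finite K2 /\
            forall y, rho2 (setminus A2 K2) y ->
              exists z, rho1 (setminus A1 K1) z /\ f z = y.

Definition tail_image (x : nat * nat -> Q01) (n : nat) : set Q01 :=
  fun q => exists m j, (n < m)%nat /\ x (m, j) = q.

Definition in_X (x : nat * nat -> Q01) : Prop :=
  (forall p : R, 0 <= p <= 1 ->
     exists U : R -> Prop, open_set U /\ U p /\
       forall n : nat, ~ (forall q, tail_image x n q -> U (proj1_sig q))) /\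
  (forall a b, x a = x b -> a = b) /\
  (forall n : nat, ~ conv (tail_image x n)).

(* Almost disjoint family {A_alpha : alpha < c}, indexed by R (a set of size c) *)
Definition almost_disjoint_family (A : R -> set nat) : Prop :=
  (forall a, infinite (A a)) /\
  (forall a b, a <> b -> A a <> A b) /\
  (forall a b, a <> b -> finite (fun n => A a n /\ A b n)).

(* Enumeration X = {x_alpha : alpha < c}, indexed by R: a bijection R -> X *)
Definition enumeration_of_X (x : R -> (nat * nat -> Q01)) : Prop :=
  (forall a, in_X (x a)) /\
  (forall y, in_X y -> exists a, x a = y) /\
  (forall a b, x a = x b -> a = b).

Definition Abar (A : R -> set nat) : set (set nat) :=
  fun B => exists a (K : set nat), finite K /\ forall n, B n <-> (A a n /\ ~ K n).

(* n is in omega \ [0, max S], with max emptyset = 0, i.e. n > max S *)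
Definition above_max (S : set nat) (n : nat) : Prop :=
  (0 < n)%nat /\ forall k, S k -> (k < n)%nat.

(* rho^{[0,1]}(A_alpha \ K) = x_alpha[(omega \ [0, max(A_alpha ∩ K)]) x omega].
   The representation (alpha, K) of B is chosen by Hilbert's epsilon; the value
   does not depend on that choice. *)
Definition rep_of (A : R -> set nat) (B : set nat) : R * set nat :=
  epsilon (inhabits (0, fun _ : nat => False))
    (fun p => finite (snd p) /\ forall n, B n <-> (A (fst p) n /\ ~ snd p n)).

Definition rho01 (A : R -> set nat) (x : R -> (nat * nat -> Q01)) (B : set nat) : set Q01 :=
  let p := rep_of A B in
  fun q => exists m j,
    above_max (fun k => A (fst p) k /\ snd p k) m /\ x (fst p) (m, j) = q.

(* A set S of rationals in [0,1] lies in conv exactly when it is concentrated on a finite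
   set L of points of [0,1]: for every eps, all but finitely many points of S are within
   eps of L.  Hence S is not in conv iff S has infinitely many accumulation points.

   rho01 <=_K rho_conv via the identity: for A not in conv, choose x in X whose m-th
   column is an injective sequence in A converging to the m-th of infinitely many
   accumulation points of A (arranged so that the limits oscillate, which gives (i) of
   X, and take infinitely many values, which gives (iii)).  If x = x_al, then
   rho01 (A_al \ {e}) only uses columns beyond e, and these avoid any finite set.

   rho_conv is not <=_K rho01: for f : Q -> Q, a cluster argument on the graph of f yields
   points c0, c1 and x in X whose columns converge alternately near 0 and near 1 and are
   mapped by f into the 1/(m+1)-neighbourhood of {c0, c1}.  For x = x_al, every image
   f[rho01 (A_al \ {e})] is concentrated on {c0, c1} as e grows, so any candidate set
   would be in conv. *)
From Stdlib Require Import Reals Qreals List ClassicalEpsilon.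
From Stdlib Require Import ZArith Lra Lia Classical ProofIrrelevance FinFun Cantor Wf_nat.
Open Scope R_scope.

Lemma Q01_val_inj (p q : Q01) : proj1_sig p = proj1_sig q -> p = q.
Proof. destruct p, q; simpl; intros ->. f_equal. apply proof_irrelevance. Qed.

Lemma Q01_bounds (q : Q01) : 0 <= proj1_sig q <= 1.
Proof. exact (proj1 (proj2_sig q)). Qed.

Lemma inv_INR_succ_pos (n : nat) : 0 < / (INR n + 1).
Proof. pose proof (pos_INR n). apply Rinv_0_lt_compat; lra. Qed.

Lemma lt_inv_INR_succ (r : R) (n : nat) : r < / (INR n + 1) <-> r * (INR n + 1) < 1.
Proof.
  pose proof (pos_INR n). split; intros H'.
  - apply Rmult_lt_compat_r with (r := INR n + 1) in H'; [|lra].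
    rewrite Rinv_l in H' by lra. exact H'.
  - apply Rmult_lt_reg_r with (INR n + 1); [lra|]. rewrite Rinv_l by lra. exact H'.
Qed.

Lemma inv_INR_succ_le (m n : nat) : (n <= m)%nat -> / (INR m + 1) <= / (INR n + 1).
Proof. intros H. apply le_INR in H. pose proof (pos_INR n). apply Rinv_le_contravar; lra. Qed.

Lemma archimed_inv_succ (eps : R) : 0 < eps ->
  exists N : nat, forall n, (N <= n)%nat -> / (INR n + 1) < eps.
Proof.
  intros He. destruct (archimed_cor1 eps He) as [N [HN HN0]].
  exists N. intros n Hn. apply le_INR in Hn. apply lt_0_INR in HN0.
  eapply Rle_lt_trans; [|exact HN]. apply Rinv_le_contravar; lra.
Qed.

Fixpoint choice_history {T : Type} (F : nat * list T -> T) (n : nat) : list T :=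
  match n with
  | O => nil
  | S k => choice_history F k ++ F (k, choice_history F k) :: nil
  end.

(* Each value is chosen outside the list of all earlier values. *)
Lemma injective_choice {T : Type} (P : nat -> T -> Prop) :
  (forall n (l : list T), exists t, P n t /\ ~ In t l) ->
  exists u : nat -> T, (forall n, P n (u n)) /\ Injective u.
Proof.
  intros H.
  destruct (choice (fun nl t => P (fst nl) t /\ ~ In t (snd nl))) as [F HF];
    [intros [n l]; apply H|].
  set (u n := F (n, choice_history F n)).
  assert (Hearlier : forall i j, (i < j)%nat -> In (u i) (choice_history F j)).
  { intros i j Hij. induction j as [|j IH]; [lia|]. simpl. apply in_or_app.
    destruct (Nat.eq_dec i j) as [->|Hne]; [right; left; reflexivity| left; apply IH; lia]. }
  exists u. split; [intros n; apply (HF (n, _))|].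
  intros i j E. destruct (Nat.lt_total i j) as [Hij|[Hij|Hij]]; auto; exfalso.
  - apply (proj2 (HF (j, choice_history F j))); simpl; fold (u j).
    rewrite <- E. apply Hearlier, Hij.
  - apply (proj2 (HF (i, choice_history F i))); simpl; fold (u i).
    rewrite E. apply Hearlier, Hij.
Qed.

Lemma injective_finite_preimage {A B : Type} (f : A -> B) : Injective f ->
  forall l : list B, exists l' : list A, forall a, In (f a) l -> In a l'.
Proof.
  intros Hf l. induction l as [|b l [l' Hl']].
  - exists nil. intros a [].
  - destruct (classic (exists a0, f a0 = b)) as [[a0 Ha0]|Hb].
    + exists (a0 :: l'). intros a [E|E]; [left; apply Hf; congruence| right; auto].
    + exists l'. intros a [E|E]; [exfalso; eauto| auto].
Qed.

Lemma In_le_list_max (l : list nat) (k : nat) : In k l -> (k <= list_max l)%nat.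
Proof.
  intros Hk. pose proof (proj1 (list_max_le l (list_max l)) (le_n _)) as H.
  rewrite Forall_forall in H. auto.
Qed.

Lemma injective_eventually_avoids {T : Type} (u : nat -> T) : Injective u ->
  forall l : list T, exists K, forall k, (K <= k)%nat -> ~ In (u k) l.
Proof.
  intros Hu l. destruct (injective_finite_preimage u Hu l) as [l' Hl'].
  exists (S (list_max l')). intros k Hk Hin.
  pose proof (In_le_list_max _ _ (Hl' k Hin)). lia.
Qed.

Lemma injective_tail_avoids {T : Type} (x0 : nat * nat -> T) : Injective x0 ->
  forall l : list T, exists n, forall m j, (n < m)%nat -> ~ In (x0 (m, j)) l.
Proof.
  intros Hx l. destruct (injective_finite_preimage x0 Hx l) as [l' Hl'].
  exists (list_max (map fst l')). intros m j Hm Hin.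
  pose proof (In_le_list_max _ _ (in_map fst _ _ (Hl' _ Hin))). simpl in *. lia.
Qed.

Lemma ValAdh_ball (u : nat -> R) (c : R) : ValAdh u c ->
  forall eps, 0 < eps -> forall N, exists p, (N <= p)%nat /\ Rabs (u p - c) < eps.
Proof.
  intros H eps He N. apply (H (fun y => Rabs (y - c) < eps) N).
  exists (mkposreal eps He). intros y Hy. exact Hy.
Qed.

Lemma Bolzano_Weierstrass_01 (u : nat -> R) : (forall n, 0 <= u n <= 1) ->
  exists c, 0 <= c <= 1 /\ ValAdh u c.
Proof.
  intros Hu.
  destruct (Bolzano_Weierstrass u (fun c => 0 <= c <= 1) (compact_P3 0 1) Hu) as [c Hc].
  exists c. split; [|exact Hc].
  split; apply Rnot_lt_le; intro Hlt.
  - destruct (ValAdh_ball u c Hc (- c) ltac:(lra) 0) as [p [_ Hp]].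
    pose proof (Hu p). split_Rabs; lra.
  - destruct (ValAdh_ball u c Hc (c - 1) ltac:(lra) 0) as [p [_ Hp]].
    pose proof (Hu p). split_Rabs; lra.
Qed.

Lemma ValAdh_injective_avoids {T : Type} (u : nat -> T) (g : T -> R) (c : R) :
  Injective u -> ValAdh (fun n => g (u n)) c ->
  forall eps, 0 < eps -> forall N (l : list T),
    exists p, (N <= p)%nat /\ Rabs (g (u p) - c) < eps /\ ~ In (u p) l.
Proof.
  intros Hu H eps He N l. destruct (injective_eventually_avoids u Hu l) as [K HK].
  destruct (ValAdh_ball _ _ H eps He (Nat.max N K)) as [p [Hp1 Hp2]].
  exists p. split; [lia|split; [exact Hp2| apply HK; lia]].
Qed.

Lemma Q01_approx (t eps : R) : 0 <= t <= 1 -> 0 < eps ->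
  exists q : Q01, Rabs (proj1_sig q - t) < eps.
Proof.
  intros Ht He. destruct (archimed_inv_succ eps He) as [N HN]. specialize (HN N (le_n N)).
  set (M := INR N + 1). assert (HM : 1 <= M) by (unfold M; pose proof (pos_INR N); lra).
  set (z := (up (t * M) - 1)%Z).
  assert (Hz : IZR z <= t * M < IZR z + 1)
    by (destruct (archimed (t * M)); unfold z; rewrite minus_IZR; lra).
  assert (Hz0 : 0 <= IZR z).
  { apply IZR_le. assert (Hz1 : (-1 < z)%Z) by (apply lt_IZR; nra). lia. }
  set (v := IZR z / M). assert (Hv : v * M = IZR z) by (unfold v; field; lra).
  assert (HQ : Q2R (QArith_base.Qmake z (Pos.of_succ_nat N)) = v).
  { unfold Q2R, v, M; simpl. rewrite Zpos_P_of_succ_nat, succ_IZR, <- INR_IZR_INZ. reflexivity. }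
  assert (Hv01 : 0 <= v <= 1) by (split; nra).
  exists (exist _ v (conj Hv01 (ex_intro _ _ (eq_sym HQ)))). simpl.
  eapply Rlt_trans; [|exact HN]. apply lt_inv_INR_succ. fold M.
  rewrite <- (Rabs_right M), <- Rabs_mult by lra. split_Rabs; nra.
Qed.

Lemma Q01_approx_exact (t eps : R) : 0 <= t <= 1 -> 0 < eps ->
  exists q : Q01, Rabs (proj1_sig q - t) < eps /\ forall q0 : Q01, proj1_sig q0 = t -> q = q0.
Proof.
  intros Ht He. destruct (classic (exists q0 : Q01, proj1_sig q0 = t)) as [[q0 Hq0]|Hno].
  - exists q0. split.
    + rewrite Hq0, Rminus_diag, Rabs_R0. exact He.
    + intros q1 Hq1. apply Q01_val_inj. congruence.
  - destruct (Q01_approx t eps Ht He) as [q Hq]. exists q. split; [exact Hq|].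
    intros q0 Hq0. exfalso. eauto.
Qed.

Lemma list_dist_pos (y : R) (L : list R) :
  exists d, 0 < d /\ forall l, In l L -> l <> y -> d <= Rabs (l - y).
Proof.
  induction L as [|a L [d [Hd HL]]].
  - exists 1. split; [lra| intros l []].
  - destruct (Req_dec a y) as [E|E].
    + exists d. split; [exact Hd|]. intros l [<-|Hl] Hne; [contradiction| auto].
    + exists (Rmin d (Rabs (a - y))). split.
      * apply Rmin_pos; [exact Hd| apply Rabs_pos_lt; lra].
      * intros l [<-|Hl] Hne; [apply Rmin_r|].
        eapply Rle_trans; [apply Rmin_l| auto].
Qed.

Lemma list_separated (L : list R) :
  exists d, 0 < d /\ forall l l', In l L -> In l' L -> l <> l' -> d <= Rabs (l - l').
Proof.
  induction L as [|a L [d [Hd HL]]].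
  - exists 1. split; [lra| intros l l' []].
  - destruct (list_dist_pos a L) as [da [Hda Ha]].
    exists (Rmin d da). split; [apply Rmin_pos; assumption|].
    intros l l' [<-|Hl] [<-|Hl'] Hne.
    + contradiction.
    + rewrite Rabs_minus_sym. eapply Rle_trans; [apply Rmin_r| apply Ha; auto].
    + eapply Rle_trans; [apply Rmin_r| apply Ha; auto].
    + eapply Rle_trans; [apply Rmin_l| apply HL; auto].
Qed.

(* "Infinitely many points of S near a" is expressed by avoiding an arbitrary finite list. *)
Definition accumulation_point (S : set Q01) (a : R) : Prop :=
  forall d, 0 < d -> forall l : list Q01,
    exists q, S q /\ Rabs (proj1_sig q - a) < d /\ ~ In q l.

Definition concentrated_on (S : set Q01) (Ls : list R) : Prop :=
  forall eps, 0 < eps -> exists K : list Q01, forall q, S q -> ~ In q K ->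
    exists l, In l Ls /\ Rabs (proj1_sig q - l) < eps.

Lemma accumulation_point_subset (S S' : set Q01) (a : R) :
  (forall q, S q -> S' q) -> accumulation_point S a -> accumulation_point S' a.
Proof.
  intros Hsub Ha d Hd l. destruct (Ha d Hd l) as [q [Hq Hq']]. exists q. auto.
Qed.

Lemma accumulation_point_Q01 (y : R) : 0 <= y <= 1 -> accumulation_point (fun _ => True) y.
Proof.
  intros Hy d Hd l. destruct (list_dist_pos y (map (@proj1_sig _ _) l)) as [d1 [Hd1 H1]].
  set (e := Rmin d (Rmin d1 (1/2))).
  assert (He : 0 < e /\ e <= d /\ e <= d1 /\ e <= 1/2)
    by (unfold e, Rmin; repeat destruct (Rle_dec _ _); lra).
  set (t := if Rle_dec y (1/2) then y + e/2 else y - e/2).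
  assert (Ht : 0 <= t <= 1 /\ Rabs (t - y) = e/2)
    by (unfold t; destruct (Rle_dec y (1/2)); split; try lra; split_Rabs; lra).
  destruct (Q01_approx t (e/4) (proj1 Ht) ltac:(lra)) as [q Hq].
  assert (Hqy : e/4 < Rabs (proj1_sig q - y) < 3*e/4) by (destruct Ht; split_Rabs; lra).
  exists q. split; [exact I| split; [lra|]]. intros Hin.
  assert (proj1_sig q <> y) by (intro E; rewrite E, Rminus_diag, Rabs_R0 in Hqy; lra).
  specialize (H1 (proj1_sig q) (in_map _ _ _ Hin) H). lra.
Qed.

Lemma accumulation_point_in_concentrated (S : set Q01) (Ls : list R) (a : R) :
  concentrated_on S Ls -> accumulation_point S a -> In a Ls.
Proof.
  intros HS Ha. apply NNPP; intro Hn.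
  destruct (list_dist_pos a Ls) as [d [Hd Hdl]].
  destruct (HS (d/2) ltac:(lra)) as [K HK].
  destruct (Ha (d/2) ltac:(lra) K) as [q [Hq [Hqa HqK]]].
  destruct (HK q Hq HqK) as [l [Hl Hql]].
  assert (Hla : l <> a) by (intros ->; contradiction).
  specialize (Hdl l Hl Hla). split_Rabs; lra.
Qed.

Lemma concentrated_on_subset (S S' : set Q01) (Ls : list R) :
  (forall q, S' q -> S q) -> concentrated_on S Ls -> concentrated_on S' Ls.
Proof.
  intros Hsub HS eps He. destruct (HS eps He) as [K HK]. exists K. auto.
Qed.

Lemma concentrated_on_union (S1 S2 : set Q01) (L1 L2 : list R) :
  concentrated_on S1 L1 -> concentrated_on S2 L2 ->
  concentrated_on (fun q => S1 q \/ S2 q) (L1 ++ L2).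
Proof.
  intros H1 H2 eps He. destruct (H1 eps He) as [K1 HK1], (H2 eps He) as [K2 HK2].
  exists (K1 ++ K2). intros q Hq HqK.
  assert (HqK' : ~ In q K1 /\ ~ In q K2) by (split; intro; apply HqK, in_or_app; auto).
  destruct HqK' as [N1 N2], Hq as [Hq|Hq];
    [destruct (HK1 q Hq N1) as [l [Hl Hql]]| destruct (HK2 q Hq N2) as [l [Hl Hql]]];
    exists l; split; auto; apply in_or_app; auto.
Qed.

Lemma concentrated_on_range (s : nat -> Q01) (L : R) :
  Un_cv (fun n => proj1_sig (s n)) L -> concentrated_on (fun q => exists n, s n = q) (L :: nil).
Proof.
  intros Hs eps He. destruct (Hs eps He) as [N HN].
  exists (map s (seq 0 N)). intros q [n <-] Hn. exists L. split; [left; reflexivity|].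
  apply HN. destruct (le_lt_dec N n) as [h|h]; [exact h|].
  exfalso. apply Hn, in_map, in_seq. lia.
Qed.

Lemma conv_concentrated_on (S : set Q01) : conv S ->
  exists Ls, (forall l, In l Ls -> 0 <= l <= 1) /\ concentrated_on S Ls.
Proof.
  intros [ss [Hc Hcov]].
  enough (H : exists Ls, (forall l, In l Ls -> 0 <= l <= 1) /\
            concentrated_on (fun q => exists s, In s ss /\ exists n, s n = q) Ls).
  { destruct H as [Ls [HL HS]]. exists Ls. split; [exact HL|].
    exact (concentrated_on_subset _ _ _ Hcov HS). }
  clear Hcov. induction ss as [|s ss IH].
  - exists nil. split; [intros _ []|]. intros eps _. exists nil. intros q [s [[] _]].
  - destruct (Hc s (or_introl eq_refl)) as [L [HL Hs]].
    destruct IH as [Ls [HLs HS]]; [intros s' Hs'; apply Hc; right; exact Hs'|].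
    exists ((L :: nil) ++ Ls). split; [intros l [<-|Hl]; auto|].
    eapply concentrated_on_subset;
      [| exact (concentrated_on_union _ _ _ _ (concentrated_on_range s L Hs) HS)].
    intros q [s' [[<-|Hs'] Hn]]; [left| right; exists s']; auto.
Qed.

Lemma conv_subset (S S' : set Q01) : (forall q, S' q -> S q) -> conv S -> conv S'.
Proof. intros Hsub [ss [Hc Hcov]]. exists ss. auto. Qed.

Lemma conv_union (S1 S2 : set Q01) : conv S1 -> conv S2 -> conv (fun q => S1 q \/ S2 q).
Proof.
  intros [ss1 [Hc1 Hv1]] [ss2 [Hc2 Hv2]]. exists (ss1 ++ ss2). split.
  - intros s Hs. apply in_app_or in Hs as [Hs|Hs]; auto.
  - intros q [Hq|Hq]; [destruct (Hv1 q Hq) as [s [Hs Hn]]| destruct (Hv2 q Hq) as [s [Hs Hn]]];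
      exists s; split; auto; apply in_or_app; auto.
Qed.

Lemma conv_list (K : list Q01) : conv (fun q => In q K).
Proof.
  exists (map (fun q _ => q) K). split.
  - intros s Hs. apply in_map_iff in Hs as [q [<- _]].
    exists (proj1_sig q). split; [apply Q01_bounds|].
    intros eps He. exists 0%nat. intros n _. unfold R_dist. rewrite Rminus_diag, Rabs_R0. exact He.
  - intros q Hq. exists (fun _ => q).
    split; [apply (in_map (fun (q : Q01) (_ : nat) => q)); exact Hq| exists 0%nat; reflexivity].
Qed.

Lemma conv_list_union (T : R -> set Q01) (Ls : list R) :
  (forall l, In l Ls -> conv (T l)) -> conv (fun q => exists l, In l Ls /\ T l q).
Proof.
  induction Ls as [|l Ls IH]; intros HT.
  - apply conv_subset with (fun q => In q nil); [intros q [l [[] _]]| apply conv_list].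
  - apply conv_subset with (fun q => T l q \/ exists l', In l' Ls /\ T l' q).
    + intros q [l' [[<-|Hl'] Hq]]; [left| right; exists l']; auto.
    + apply conv_union; [apply HT; left; reflexivity|].
      apply IH. intros l' Hl'. apply HT. right. exact Hl'.
Qed.

Lemma flatten_blocks {T : Type} (b : nat -> list T) (d : T) : (forall n, b n <> nil) ->
  exists s : nat -> T,
    (forall n t, In t (b n) -> exists k, s k = t) /\
    (forall N, exists K, forall k, (K <= k)%nat -> exists n, (N <= n)%nat /\ In (s k) (b n)).
Proof.
  intros Hb. set (F N := flat_map b (seq 0 N)).
  assert (HF_app : forall N m, F (N + m)%nat = F N ++ flat_map b (seq N m))
    by (intros N m; unfold F; rewrite seq_app, flat_map_app; reflexivity).
  assert (HF_len : forall N, (N <= length (F N))%nat).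
  { induction N as [|N IH]; [simpl; lia|].
    rewrite <- Nat.add_1_r, HF_app, length_app. simpl. rewrite app_nil_r.
    destruct (b N) eqn:E; [contradiction (Hb N)| simpl; lia]. }
  assert (HF_nth : forall j N N', (j < length (F N))%nat -> (N <= N')%nat ->
                     nth j (F N') d = nth j (F N) d).
  { intros j N N' Hj HN. replace N' with (N + (N' - N))%nat by lia.
    rewrite HF_app, app_nth1; auto. }
  exists (fun k => nth k (F (S k)) d). split.
  - intros n t Ht.
    assert (Hin : In t (F (S n)))
      by (apply in_flat_map; exists n; split; [apply in_seq; lia| exact Ht]).
    destruct (In_nth _ _ d Hin) as [j [Hj <-]]. exists j.
    transitivity (nth j (F (Nat.max (S j) (S n))) d); [symmetry|]; apply HF_nth; try lia.
    pose proof (HF_len (S j)). lia.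
  - intros N. exists (length (F N)). intros k Hk. pose proof (HF_len N). pose proof (HF_len (S k)).
    assert (E : F (S k) = F N ++ flat_map b (seq N (S k - N)))
      by (rewrite <- HF_app; f_equal; lia).
    rewrite E in *. rewrite length_app in *. rewrite app_nth2 by lia.
    assert (Hin : In (nth (k - length (F N)) (flat_map b (seq N (S k - N))) d)
                     (flat_map b (seq N (S k - N)))) by (apply nth_In; lia).
    apply in_flat_map in Hin as [n [Hn Hin]]. apply in_seq in Hn.
    exists n. split; [lia| exact Hin].
Qed.

Lemma exists_nat_scale (r : R) : 0 < r ->
  exists m : nat, r * INR m < 1 /\ 1 <= r * (INR m + 1).
Proof.
  intros Hr.
  destruct (dec_inh_nat_subset_has_unique_least_element (fun m => 1 <= r * (INR m + 1)))
    as [m [[Hm Hmin] _]].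
  - intros m. apply classic.
  - destruct (archimed_inv_succ r Hr) as [N HN]. exists N. specialize (HN N (le_n N)).
    apply Rnot_lt_le. intro H. apply lt_inv_INR_succ in H. lra.
  - exists m. split; [|exact Hm]. destruct m as [|k]; [simpl; lra|]. rewrite S_INR.
    apply Rnot_le_lt. intro H. specialize (Hmin k H). lia.
Qed.

(* Concatenating, for n = 0, 1, ..., the exceptional points at scale 1/(n+1) that are
   still within 1/n of l gives one sequence converging to l. *)
Lemma conv_of_concentrated_on_point (T : set Q01) (l : R) :
  0 <= l <= 1 -> concentrated_on T (l :: nil) -> conv T.
Proof.
  intros Hl HT.
  assert (HK : forall n, exists K : list Q01, forall q, T q -> ~ In q K ->
                 Rabs (proj1_sig q - l) * (INR n + 1) < 1).
  { intros n. destruct (HT _ (inv_INR_succ_pos n)) as [K HK]. exists K. intros q Hq HqK.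
    destruct (HK q Hq HqK) as [l' [[<-|[]] Hq']]. apply lt_inv_INR_succ. exact Hq'. }
  destruct (choice _ HK) as [Kf HKf].
  destruct (choice _ (fun n => Q01_approx_exact l _ Hl (inv_INR_succ_pos n))) as [fill Hfill].
  set (b n := fill n :: filter (fun q =>
        if Rlt_dec (Rabs (proj1_sig q - l) * INR n) 1 then true else false) (Kf n)).
  assert (Hb : forall n q, In q (b n) -> Rabs (proj1_sig q - l) * INR n < 1).
  { intros n q [<-|Hq].
    - pose proof (proj1 (lt_inv_INR_succ _ n) (proj1 (Hfill n))).
      pose proof (Rabs_pos (proj1_sig (fill n) - l)). nra.
    - apply filter_In in Hq as [_ Hq]. destruct (Rlt_dec _ _); [assumption| discriminate]. }
  assert (Hne : forall n, b n <> nil) by (intros n; unfold b; discriminate).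
  destruct (flatten_blocks b (fill 0%nat) Hne) as [s [Hcover Htail]].
  exists (s :: nil). split.
  - intros s' [<-|[]]. exists l. split; [exact Hl|]. intros eps He.
    destruct (archimed_inv_succ eps He) as [N HN]. destruct (Htail (S N)) as [K HKt].
    exists K. intros k Hk. destruct (HKt k Hk) as [n [Hn Hin]]. unfold R_dist.
    apply Rlt_trans with (/ (INR N + 1)); [|apply HN; lia].
    apply lt_inv_INR_succ. pose proof (Hb n _ Hin). apply le_INR in Hn. rewrite S_INR in Hn.
    pose proof (Rabs_pos (proj1_sig (s k) - l)). nra.
  - intros q Hq. exists s. split; [left; reflexivity|].
    assert (Hblock : exists n, In q (b n)).
    { destruct (Req_dec (proj1_sig q) l) as [E|E].
      - exists 0%nat. left. apply (proj2 (Hfill 0%nat)). exact E.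
      - destruct (exists_nat_scale (Rabs (proj1_sig q - l))) as [m [Hlt Hge]];
          [apply Rabs_pos_lt; lra|].
        exists m. right. apply filter_In. split.
        + apply NNPP. intro HqK. pose proof (HKf m q Hq HqK). lra.
        + destruct (Rlt_dec _ _); [reflexivity| contradiction]. }
    destruct Hblock as [n Hn]. exact (Hcover n q Hn).
Qed.

(* Points of S near a point l of Ls, closer than half the separation of Ls, can only
   concentrate at l itself. *)
Lemma conv_of_concentrated_on (S : set Q01) (Ls : list R) :
  (forall l, In l Ls -> 0 <= l <= 1) -> concentrated_on S Ls -> conv S.
Proof.
  intros HLs HS. destruct (list_separated Ls) as [d [Hd Hsep]].
  destruct (HS (d/2) ltac:(lra)) as [K0 HK0].
  apply conv_subset with (fun q => In q K0 \/
      exists l, In l Ls /\ S q /\ Rabs (proj1_sig q - l) < d/2).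
  - intros q Hq. destruct (classic (In q K0)) as [H|H]; [left; exact H| right].
    destruct (HK0 q Hq H) as [l [Hl Hql]]. exists l. auto.
  - apply conv_union; [apply conv_list|].
    apply (conv_list_union (fun l q => S q /\ Rabs (proj1_sig q - l) < d/2)). intros l Hl.
    apply conv_of_concentrated_on_point with l; [auto|].
    intros eps He. destruct (HS (Rmin eps (d/2)) (Rmin_pos eps (d/2) He ltac:(lra))) as [K HK].
    exists K. intros q [Hq Hql] HqK. destruct (HK q Hq HqK) as [l' [Hl' Hql']].
    pose proof (Rmin_l eps (d/2)). pose proof (Rmin_r eps (d/2)).
    exists l. split; [left; reflexivity|].
    destruct (Req_dec l l') as [<-|Hne]; [lra|].
    specialize (Hsep l l' Hl Hl' Hne). exfalso. split_Rabs; lra.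
Qed.

Lemma infinite_accumulation_point (S : set Q01) :
  (forall l : list Q01, exists q, S q /\ ~ In q l) ->
  exists a, 0 <= a <= 1 /\ accumulation_point S a.
Proof.
  intros HS. destruct (injective_choice (fun _ q => S q) (fun _ l => HS l)) as [u [Hu Hinj]].
  destruct (Bolzano_Weierstrass_01 (fun k => proj1_sig (u k)) (fun k => Q01_bounds (u k)))
    as [a [Ha HV]].
  exists a. split; [exact Ha|]. intros d Hd l.
  destruct (ValAdh_injective_avoids u _ a Hinj HV d Hd 0 l) as [p [_ [Hp1 Hp2]]].
  exists (u p). auto.
Qed.

Lemma conv_of_accumulation_points_in (S : set Q01) (L : list R) :
  (forall a, accumulation_point S a -> In a L) -> conv S.
Proof.
  intros HL.
  set (L01 := filter (fun l => if Rle_dec 0 l then if Rle_dec l 1 then true else false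
                               else false) L).
  apply conv_of_concentrated_on with L01.
  - intros l Hl. apply filter_In in Hl as [_ Hl].
    destruct (Rle_dec 0 l), (Rle_dec l 1); try discriminate; lra.
  - intros eps He. apply NNPP; intro Hnot.
    destruct (infinite_accumulation_point
                (fun q => S q /\ forall l, In l L01 -> eps <= Rabs (proj1_sig q - l)))
      as [a [Ha01 Ha]].
    { intros K. apply NNPP; intro HK. apply Hnot. exists K. intros q Hq HqK.
      apply NNPP; intro Hfar. apply HK. exists q. split; [split|]; auto.
      intros l Hl. apply Rnot_lt_le; intro. apply Hfar; eauto. }
    assert (HaL : In a L01).
    { apply filter_In. split.
      - apply HL. eapply accumulation_point_subset; [|exact Ha]. intros q [Hq _]. exact Hq.
      - destruct (Rle_dec 0 a), (Rle_dec a 1); reflexivity || lra. }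
    destruct (Ha eps He nil) as [q [[_ Hfar] [Hq _]]]. specialize (Hfar a HaL). lra.
Qed.

Lemma injective_grid_choice (P : nat -> set Q01) (a : nat -> R) :
  (forall m, accumulation_point (P m) (a m)) ->
  exists x0 : nat * nat -> Q01, Injective x0 /\
    forall m j, P m (x0 (m, j)) /\ Rabs (proj1_sig (x0 (m, j)) - a m) < / (INR j + 1).
Proof.
  intros Ha.
  destruct (injective_choice (fun k q => let '(m, j) := of_nat k in
              P m q /\ Rabs (proj1_sig q - a m) < / (INR j + 1))) as [y [Hy Hinj]].
  { intros k l. destruct (of_nat k) as [m j].
    destruct (Ha m _ (inv_INR_succ_pos j) l) as [q [Hq1 [Hq2 Hq3]]]. eauto. }
  exists (fun p => y (to_nat p)). split.
  - intros p1 p2 E. apply Hinj in E.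
    rewrite <- (cancel_of_to p1), <- (cancel_of_to p2), E. reflexivity.
  - intros m j. pose proof (Hy (to_nat (m, j))) as H. rewrite cancel_of_to in H. exact H.
Qed.

Lemma tail_image_not_local (x0 : nat * nat -> Q01) (a : nat -> R) (d : R) :
  (forall m j, Rabs (proj1_sig (x0 (m, j)) - a m) < / (INR j + 1)) -> 0 < d ->
  (forall n, exists m1 m2, (n < m1)%nat /\ (n < m2)%nat /\ d <= Rabs (a m1 - a m2)) ->
  forall p : R, exists U : R -> Prop, open_set U /\ U p /\
    forall n, ~ (forall q, tail_image x0 n q -> U (proj1_sig q)).
Proof.
  intros Hx Hd Hosc p. set (r := mkposreal (d/4) ltac:(lra)).
  exists (disc p r). split; [apply disc_P1|]. split.
  - unfold disc. rewrite Rminus_diag, Rabs_R0. simpl. lra.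
  - intros n Hall. destruct (Hosc n) as [m1 [m2 [Hm1 [Hm2 Hdm]]]].
    destruct (archimed_inv_succ (d/4) ltac:(lra)) as [J HJ]. specialize (HJ J (le_n J)).
    pose proof (Hx m1 J) as E1. pose proof (Hx m2 J) as E2.
    pose proof (Hall (x0 (m1, J)) (ex_intro _ m1 (ex_intro _ J (conj Hm1 eq_refl)))) as U1.
    pose proof (Hall (x0 (m2, J)) (ex_intro _ m2 (ex_intro _ J (conj Hm2 eq_refl)))) as U2.
    unfold disc in U1, U2. simpl in U1, U2. split_Rabs; lra.
Qed.

Lemma tail_image_not_conv (x0 : nat * nat -> Q01) (a : nat -> R) :
  Injective x0 -> (forall m j, Rabs (proj1_sig (x0 (m, j)) - a m) < / (INR j + 1)) ->
  (forall n (L : list R), exists m, (n < m)%nat /\ ~ In (a m) L) ->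
  forall n, ~ conv (tail_image x0 n).
Proof.
  intros Hinj Hx Hesc n Hc. destruct (conv_concentrated_on _ Hc) as [Ls [_ HLs]].
  destruct (Hesc n Ls) as [m [Hm HmL]]. apply HmL.
  apply (accumulation_point_in_concentrated _ _ _ HLs). intros d Hd l.
  assert (Hcol : Injective (fun j => x0 (m, j)))
    by (intros i j E; apply Hinj in E; injection E; auto).
  destruct (injective_eventually_avoids _ Hcol l) as [K HK].
  destruct (archimed_inv_succ d Hd) as [N HN].
  exists (x0 (m, Nat.max K N)). split; [exists m, (Nat.max K N); auto|]. split.
  - eapply Rlt_trans; [apply Hx| apply HN; lia].
  - apply HK. lia.
Qed.

Lemma in_X_from_columns (P : nat -> set Q01) (a : nat -> R) :
  (forall m, accumulation_point (P m) (a m)) ->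
  (forall n (L : list R), exists m, (n < m)%nat /\ ~ In (a m) L) ->
  (exists d, 0 < d /\
     forall n, exists m1 m2, (n < m1)%nat /\ (n < m2)%nat /\ d <= Rabs (a m1 - a m2)) ->
  exists x0, in_X x0 /\ forall m j, P m (x0 (m, j)).
Proof.
  intros Hacc Hesc [d [Hd Hosc]].
  destruct (injective_grid_choice P a Hacc) as [x0 [Hinj Hx]].
  exists x0. split; [|intros m j; apply Hx]. split; [|split; [exact Hinj|]].
  - intros p _. apply (tail_image_not_local x0 a d); auto. intros m j; apply Hx.
  - apply (tail_image_not_conv x0 a Hinj); auto. intros m j; apply Hx.
Qed.

Lemma in_X_with_values_in (A1 : set Q01) : ~ conv A1 ->
  exists x0, in_X x0 /\ forall m j, A1 (x0 (m, j)).
Proof.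
  intros Hnc.
  destruct (injective_choice (fun _ a => accumulation_point A1 a)) as [g [Hg Hinj]].
  { intros _ L. apply NNPP; intro Hall. apply Hnc, (conv_of_accumulation_points_in A1 L).
    intros a Ha. apply NNPP; intro HaL. apply Hall; eauto. }
  (* Even columns alternate between the limits g 0 and g 1; odd ones run through all of g. *)
  apply (in_X_from_columns (fun _ => A1) (fun m =>
    if Nat.even m then (if Nat.even (Nat.div2 m) then g 0%nat else g 1%nat) else g m)).
  - intros m. destruct (Nat.even m); [destruct (Nat.even (Nat.div2 m))|]; apply Hg.
  - intros n L. destruct (injective_eventually_avoids g Hinj L) as [K HK].
    exists (2 * Nat.max n K + 1)%nat. rewrite Nat.even_odd. split; [lia| apply HK; lia].
  - exists (Rabs (g 0%nat - g 1%nat)). split.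
    + apply Rabs_pos_lt. intro E. assert (H01 : g 0%nat = g 1%nat) by lra.
      apply Hinj in H01. discriminate.
    + intros n. exists (2 * (2 * S n))%nat, (2 * (2 * S n + 1))%nat.
      rewrite !Nat.even_even, !Nat.div2_double, Nat.even_even, Nat.even_odd.
      split; [lia| split; [lia| apply Rle_refl]].
Qed.

Lemma graph_accumulation_point (F : Q01 -> R) (y : R) :
  (forall q, 0 <= F q <= 1) -> 0 <= y <= 1 ->
  exists c, 0 <= c <= 1 /\ forall e, 0 < e -> accumulation_point (fun q => Rabs (F q - c) < e) y.
Proof.
  intros HF Hy.
  destruct (injective_choice (fun j (q : Q01) => Rabs (proj1_sig q - y) < / (INR j + 1)))
    as [s [Hs Hinj]].
  { intros j l. destruct (accumulation_point_Q01 y Hy _ (inv_INR_succ_pos j) l) as [q [_ Hq]].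
    eauto. }
  destruct (Bolzano_Weierstrass_01 (fun k => F (s k)) (fun k => HF (s k))) as [c [Hc HV]].
  exists c. split; [exact Hc|]. intros e He d Hd l. destruct (archimed_inv_succ d Hd) as [N HN].
  destruct (ValAdh_injective_avoids s F c Hinj HV e He N l) as [p [Hp [Hpc Hpl]]].
  exists (s p). split; [exact Hpc| split; [|exact Hpl]].
  eapply Rlt_trans; [apply Hs| apply HN; exact Hp].
Qed.

Lemma graph_accumulation_along (F : Q01 -> R) (y : nat -> R) :
  (forall q, 0 <= F q <= 1) -> (forall k, 0 <= y k <= 1) ->
  exists c (k : nat -> nat), 0 <= c <= 1 /\ (forall i, (i <= k i)%nat) /\
    forall i, accumulation_point (fun q => Rabs (F q - c) < / (INR i + 1)) (y (k i)).
Proof.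
  intros HF Hy.
  destruct (choice _ (fun k => graph_accumulation_point F (y k) HF (Hy k))) as [ck Hck].
  destruct (Bolzano_Weierstrass_01 ck (fun k => proj1 (Hck k))) as [c [Hc HV]].
  assert (Hhalf : forall i, 0 < / (INR i + 1) / 2)
    by (intros i; pose proof (inv_INR_succ_pos i); lra).
  destruct (choice (fun i k => (i <= k)%nat /\ Rabs (ck k - c) < / (INR i + 1) / 2))
    as [k Hk].
  { intros i. destruct (ValAdh_ball _ _ HV _ (Hhalf i) i) as [p Hp]. eauto. }
  exists c, k. split; [exact Hc|]. split; [intros i; apply Hk|]. intros i d Hd l.
  destruct (proj2 (Hck (k i)) _ (Hhalf i) d Hd l) as [q [Hq1 Hq2]].
  exists q. split; [|exact Hq2]. destruct (Hk i) as [_ Hki]. split_Rabs; lra.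
Qed.

Lemma in_X_with_image_concentrated (f : Q01 -> Q01) :
  exists x0 (Ls : list R), (forall l, In l Ls -> 0 <= l <= 1) /\ in_X x0 /\
    forall m j, exists l, In l Ls /\ Rabs (proj1_sig (f (x0 (m, j))) - l) < / (INR m + 1).
Proof.
  set (F q := proj1_sig (f q)). assert (HF : forall q, 0 <= F q <= 1) by (intros; apply Q01_bounds).
  set (y k := / (INR k + 4)).
  assert (Hy : forall k, 0 <= y k <= 1/4).
  { intros k. unfold y. pose proof (pos_INR k). split; [apply Rlt_le, Rinv_0_lt_compat; lra|].
    replace (1/4) with (/4) by lra. apply Rinv_le_contravar; lra. }
  assert (Hyinj : Injective (fun k => 1 - y k)).
  { intros i j E. apply INR_eq. assert (E' : y i = y j) by lra.
    apply Rinv_eq_reg in E'. lra. }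
  destruct (graph_accumulation_along F y HF ltac:(intros k; pose proof (Hy k); lra))
    as [c0 [k0 [Hc0 [Hk0 Hacc0]]]].
  destruct (graph_accumulation_along F (fun k => 1 - y k) HF
              ltac:(intros k; pose proof (Hy k); lra)) as [c1 [k1 [Hc1 [Hk1 Hacc1]]]].
  destruct (in_X_from_columns
              (fun m q => exists l, In l (c0 :: c1 :: nil) /\ Rabs (F q - l) < / (INR m + 1))
              (fun m => if Nat.even m then y (k0 m) else 1 - y (k1 m))) as [x0 [HX Hx]].
  - intros m. destruct (Nat.even m).
    + apply accumulation_point_subset with (2 := Hacc0 m).
      intros q Hq. exists c0. split; [left|]; auto.
    + apply accumulation_point_subset with (2 := Hacc1 m).
      intros q Hq. exists c1. split; [right; left|]; auto.
  - intros n L. destruct (injective_eventually_avoids _ Hyinj L) as [K HK].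
    exists (2 * Nat.max n K + 1)%nat. rewrite Nat.even_odd.
    split; [lia| apply HK]. specialize (Hk1 (2 * Nat.max n K + 1)%nat). lia.
  - exists (1/2). split; [lra|]. intros n. exists (2 * S n)%nat, (2 * S n + 1)%nat.
    rewrite Nat.even_even, Nat.even_odd. split; [lia| split; [lia|]].
    pose proof (Hy (k0 (2 * S n)%nat)). pose proof (Hy (k1 (2 * S n + 1)%nat)). split_Rabs; lra.
  - exists x0, (c0 :: c1 :: nil). split; [intros l [<-|[<-|[]]]; assumption|]. auto.
Qed.

(* The representation of A_al \ K chosen by [rep_of] has index al, since A_al is not
   almost contained in any other A_be. *)
Lemma rho01_setminus (A : R -> set nat) (x : R -> nat * nat -> Q01) (al : R) (K : set nat) :
  almost_disjoint_family A -> finite K ->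
  forall y, rho01 A x (setminus (A al) K) y ->
    exists m j, above_max (fun k => A al k /\ K k) m /\ x al (m, j) = y.
Proof.
  intros [HAinf [_ HAd]] HK y Hy. unfold rho01 in Hy.
  assert (Hrep : finite (snd (rep_of A (setminus (A al) K))) /\
            forall n, setminus (A al) K n <->
              A (fst (rep_of A (setminus (A al) K))) n /\ ~ snd (rep_of A (setminus (A al) K)) n)
    by (unfold rep_of; apply epsilon_spec; exists (al, K); split; [exact HK| reflexivity]).
  destruct (rep_of A (setminus (A al) K)) as [be K'].
  simpl in Hrep, Hy. destruct Hrep as [_ Hrep].
  assert (be = al) as ->.
  { apply NNPP; intro Hne. destruct (HAd al be (fun E => Hne (eq_sym E))) as [lI HI].
    destruct HK as [lK HlK]. apply (HAinf al). exists (lI ++ lK). intros n Hn. apply in_or_app.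
    destruct (classic (K n)) as [Kn|Kn]; [right; auto| left].
    apply HI. split; [exact Hn|]. apply (proj1 (Hrep n)). split; assumption. }
  destruct Hy as [m [j [[Hm0 Hm] Hxy]]]. exists m, j. split; [split; [exact Hm0|]| exact Hxy].
  intros k [Hk HKk]. apply Hm. split; [exact Hk|]. apply NNPP; intro HK'k.
  exact (proj2 (proj2 (Hrep k) (conj Hk HK'k)) HKk).
Qed.

Lemma finite_singleton (e : nat) : finite (fun k => k = e).
Proof. exists (e :: nil). intros k ->. left. reflexivity. Qed.

Lemma Abar_member (A : R -> set nat) (al : R) : Abar A (A al).
Proof. exists al, (fun _ => False). split; [exists nil; intros _ []| intros n; tauto]. Qed.

Lemma infinite_unbounded (B : set nat) : infinite B -> forall n, exists e, B e /\ (n <= e)%nat.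
Proof.
  intros Hinf n. apply NNPP; intro Hc. apply Hinf. exists (seq 0 n). intros k Hk.
  apply in_seq. destruct (le_lt_dec n k); [exfalso; apply Hc; eauto| lia].
Qed.

Lemma rho01_Kle_rho_conv (A : R -> set nat) (x : R -> nat * nat -> Q01) :
  almost_disjoint_family A -> enumeration_of_X x ->
  Kle (Abar A) (rho01 A x) conv_plus rho_conv.
Proof.
  intros HA [_ [Hsurj _]]. exists (fun q => q). intros A1 HA1.
  destruct (in_X_with_values_in A1 HA1) as [x0 [HX0 Hx0]].
  destruct (Hsurj x0 HX0) as [al <-].
  exists (A al). split; [apply Abar_member|]. intros K1 [l1 Hl1].
  destruct (injective_tail_avoids (x al) (proj1 (proj2 HX0)) l1) as [n Hn].
  destruct (infinite_unbounded _ (proj1 HA al) (S n)) as [e [He Hne]].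
  exists (fun k => k = e). split; [apply finite_singleton|]. intros y Hy.
  destruct (rho01_setminus A x al _ HA (finite_singleton e) y Hy) as [m [j [[_ Hm] <-]]].
  specialize (Hm e (conj He eq_refl)).
  exists (x al (m, j)). split; [split|reflexivity].
  - apply Hx0.
  - intro HK1. apply (Hn m j); [lia| apply Hl1; exact HK1].
Qed.

Lemma not_rho_conv_Kle_rho01 (A : R -> set nat) (x : R -> nat * nat -> Q01) :
  almost_disjoint_family A -> enumeration_of_X x ->
  ~ Kle conv_plus rho_conv (Abar A) (rho01 A x).
Proof.
  intros HA [_ [Hsurj _]] [f Hf].
  destruct (in_X_with_image_concentrated f) as [x0 [Ls [HLs [HX0 Hx0]]]].
  destruct (Hsurj x0 HX0) as [al <-].
  destruct (Hf (A al) (Abar_member A al)) as [A2 [HA2 HK]].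
  apply HA2, (conv_of_concentrated_on _ Ls HLs). intros eps Heps.
  destruct (archimed_inv_succ eps Heps) as [n Hn].
  destruct (infinite_unbounded _ (proj1 HA al) n) as [e [He Hne]].
  destruct (HK (fun k => k = e) (finite_singleton e)) as [K2 [[l2 Hl2] HK2]].
  exists l2. intros q Hq Hql.
  destruct (HK2 q (conj Hq (fun h => Hql (Hl2 q h)))) as [z [Hz <-]].
  destruct (rho01_setminus A x al _ HA (finite_singleton e) z Hz) as [m [j [[_ Hm] <-]]].
  specialize (Hm e (conj He eq_refl)).
  destruct (Hx0 m j) as [l [Hl Hfl]]. exists l. split; [exact Hl|].
  eapply Rlt_le_trans; [exact Hfl|]. apply Rlt_le.
  eapply Rle_lt_trans; [apply inv_INR_succ_le with (n := n)| apply Hn]; lia.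
Qed.

Theorem theorem6p8 :
  forall (A : R -> set nat) (x : R -> (nat * nat -> Q01)),
    almost_disjoint_family A ->
    enumeration_of_X x ->
    Kle (Abar A) (rho01 A x) conv_plus rho_conv /\
    ~ Kle conv_plus rho_conv (Abar A) (rho01 A x).
Proof.
  intros A x HA Hx. split.
  - exact (rho01_Kle_rho_conv A x HA Hx).
  - exact (not_rho_conv_Kle_rho01 A x HA Hx).
Qed.
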